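(* Let $m=rn$. There is a bijection between ordered pairs $(P,Q)$ of standard Young tableaux of the same shape, both in $T([m];d)$ and both satisfying Condition (T), and walks in $\widetilde W(d,2m;\vec 0)$ staying in the region $\{x_1\ge x_2\ge\cdots\ge x_d\}$. (Explicitly: if $c_1\cdots c_m$ and $c'_1\cdots c'_m$ are the column-index sequences of $P$ and $Q$, where $c_i$ is the column of $P$ containing $i$, the pair corresponds to the walk $c_1\cdots c_m\,|\,c'_m\cdots c'_1$.)
   Context: $n,r,d\ge1$, $m=rn$. $T([m];d)$ is the set of standard Young tableaux with entries exactly $1,\dots,m$ and at most $d$ columns; row $i$ is above row $i+1$. Condition (T): for each $i\in[n]$ and $1\le s<r$, the row containing $r(i-1)+s$ is strictly above the row containing $r(i-1)+s+1$. A walk $a_1\cdots a_m|b_1\cdots b_m$ ($a_i,b_i\in[d]$) denotes the walk in $\mathbb Z^d$ from the origin with steps $e_{a_1},\dots,e_{a_m},-e_{b_1},\dots,-e_{b_m}$. $W'(d,2m;\vec 0)$ is the set of such walks ending at the origin with $a_{r(i-1)+s}\ge a_{r(i-1)+s+1}$ and $b_{r(i-1)+s}\ge b_{r(i-1)+s+1}$ for all $i\in[n]$, $1\le s<r$. For $w=a_1\cdots a_m|b_1\cdots b_m$, $\tilde w=a_1\cdots a_m|b_m\cdots b_1$, and $\widetilde W(d,2m;\vec0)=\{\tilde w:w\in W'(d,2m;\vec0)\}$. A walk stays in a region if all visited points lie in it. *)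

From mathcomp Require Import all_boot all_order all_algebra.
Set Implicit Arguments. Unset Strict Implicit. Unset Printing Implicit Defensive.

(* A tableau is the list of its rows, top row first (row 0 is the top row);
   each row lists its entries from left to right. *)
Definition tableau := seq (seq nat).

Definition shape (T : tableau) : seq nat := map size T.

Definition is_SYT (m : nat) (T : tableau) : Prop :=
  [/\ all (fun row => 0 < size row) T,
      sorted geq (shape T),
      perm_eq (flatten T) (iota 1 m),
      all (sorted ltn) T
    & forall i j, j < size (nth [::] T i.+1) ->
        nth 0 (nth [::] T i) j < nth 0 (nth [::] T i.+1) j].

Definition in_T (m d : nat) (T : tableau) : Prop :=
  is_SYT m T /\ all (fun row => size row <= d) T.

(* Row index (0 = top) and column index (1-based, in [d]) of entry k. *)
Definition rowof (T : tableau) (k : nat) : nat := find (fun row => k \in row) T.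
Definition colof (T : tableau) (k : nat) : nat :=
  (index k (nth [::] T (rowof T k))).+1.

Definition colseq (m : nat) (T : tableau) : seq nat := map (colof T) (iota 1 m).

Definition condT (n r : nat) (T : tableau) : Prop :=
  forall i s, 1 <= i <= n -> 1 <= s < r ->
    rowof T (r * (i - 1) + s) < rowof T (r * (i - 1) + s + 1).

(* A walk a_1..a_m | b_1..b_m is the pair (a, b). *)
Definition walk := (seq nat * seq nat)%type.

(* Its list of steps: (j, true) = +e_j, (j, false) = -e_j. *)
Definition steps (w : walk) : seq (nat * bool) :=
  [seq (x, true) | x <- w.1] ++ [seq (x, false) | x <- w.2].

Definition coord (s : seq (nat * bool)) (j : nat) : int :=
  (count (fun st => (st.1 == j) && st.2) s)%:Z
  - (count (fun st => (st.1 == j) && ~~ st.2) s)%:Z.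

(* 1-indexed entry of a sequence. *)
Definition ent (a : seq nat) (k : nat) : nat := nth 0 a k.-1.

Definition block_decr (n r : nat) (a : seq nat) : Prop :=
  forall i s, 1 <= i <= n -> 1 <= s < r ->
    ent a (r * (i - 1) + s + 1) <= ent a (r * (i - 1) + s).

Definition in_W' (n r d m : nat) (w : walk) : Prop :=
  [/\ size w.1 = m /\ size w.2 = m,
      all (fun x => 1 <= x <= d) w.1, all (fun x => 1 <= x <= d) w.2,
      (forall j, coord (steps w) j = 0)
    & block_decr n r w.1 /\ block_decr n r w.2].

Definition tilde (w : walk) : walk := (w.1, rev w.2).

Definition in_Wtilde (n r d m : nat) (w : walk) : Prop :=
  exists w', in_W' n r d m w' /\ w = tilde w'.

Definition stays_in_chamber (d : nat) (w : walk) : Prop :=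
  forall k, k <= size (steps w) ->
    forall j, 1 <= j < d ->
      (coord (take k (steps w)) j.+1 <= coord (take k (steps w)) j)%R.

Definition good_pair (n r d m : nat) (P Q : tableau) : Prop :=
  [/\ in_T m d P, in_T m d Q, shape P = shape Q, condT n r P & condT n r Q].

Definition good_walk (n r d m : nat) (w : walk) : Prop :=
  in_Wtilde n r d m w /\ stays_in_chamber d w.

Definition corr (m : nat) (P Q : tableau) : walk := (colseq m P, rev (colseq m Q)).

From Pilot Require Import Defs.
From mathcomp Require Import all_boot all_order all_algebra zify.
Set Implicit Arguments. Unset Strict Implicit. Unset Printing Implicit Defensive.
Import GRing.Theory.

(* A standard tableau with at most [d] columns is determined by its column word
   [c_1 ... c_m]: row [i] consists of the positions of the [(i+1)]-st
   occurrences of the letters [1, 2, ...].  The words arising in this way are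
   exactly the lattice words over [[d]] (every prefix contains at least as many
   letters [j] as letters [j+1]), and two tableaux have the same shape iff
   their words have the same content.  Along a walk [c | rev c'] with balanced
   content the visited points are the prefix counts of [c] followed, backwards,
   by those of [c'], so the walk stays in [x_1 >= ... >= x_d] iff [c] and [c']
   are lattice words.  Finally [k+1] lies in a lower row than [k] iff its
   column is not to the right of that of [k], which turns Condition (T) into
   the block-decreasing condition defining [W'(d, 2m; 0)]. *)

Lemma sorted_nth_count (T : eqType) (x0 : T) (leT : rel T) (P : pred T) s i :
  transitive leT -> sorted leT s -> {in s &, forall a b, leT a b -> P b -> P a} ->
  i < size s -> P (nth x0 s i) = (i < count P s).
Proof.
move=> leT_tr; elim: s i => [|a s IHs] i //= s_sorted P_down lt_i_s.
have P_down' : {in s &, forall a b, leT a b -> P b -> P a}.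
  by move=> x y xs ys; apply: P_down; rewrite inE ?xs ?ys orbT.
have noP_tail : ~~ P a -> count P s = 0.
  move=> nPa; apply/eqP; rewrite -leqn0 leqNgt -has_count; apply/hasP => -[b bs Pb].
  have leab : leT a b by apply: (allP (order_path_min leT_tr s_sorted)).
  by rewrite (P_down a b) ?mem_head ?inE ?bs ?orbT in nPa.
case: i lt_i_s => [|i] lt_i_s /=; rewrite ?IHs ?(path_sorted s_sorted) //.
all: by case: (boolP (P a)) => [// | /noP_tail ->].
Qed.

Lemma count_iota_downclosed (P : pred nat) d :
  (forall a b, 0 < a -> a <= b -> b <= d -> P b -> P a) ->
  forall j, 0 < j <= d -> P j = (j <= count P (iota 1 d)).
Proof.
move=> P_down j /andP[j_gt0 le_j_d].
have := @sorted_nth_count _ 0 ltn P (iota 1 d) j.-1 ltn_trans (iota_ltn_sorted 1 d).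
rewrite nth_iota ?add1n ?prednK ?size_iota //; apply=> // a b.
by rewrite !mem_iota => a_in b_in lt_ab; apply: P_down; lia.
Qed.

Lemma count_iota_leq s d : s <= d -> count (leq^~ s) (iota 1 d) = s.
Proof.
move=> le_s_d; rewrite -(subnKC le_s_d) iotaD count_cat.
rewrite (eq_in_count (a2 := predT)); last by move=> x; rewrite mem_iota /=; lia.
rewrite count_predT size_iota (eq_in_count (a2 := pred0)) ?count_pred0 ?addn0 //.
by move=> x; rewrite mem_iota /=; lia.
Qed.

Lemma sorted_map_iota (T : Type) (leT : rel T) (f : nat -> T) a n :
  (forall k, a <= k -> k.+1 < a + n -> leT (f k) (f k.+1)) ->
  sorted leT (map f (iota a n)).
Proof.
elim: n a => [|[|n] IHn] a //= f_incr.
rewrite f_incr //; last lia.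
by apply: (IHn a.+1) => k lo hi; apply: f_incr; lia.
Qed.

Lemma mem_flatten_nth (T : eqType) (ss : seq (seq T)) x :
  (x \in flatten ss) <-> exists k, x \in nth [::] ss k.
Proof.
split=> [/flattenP [s s_in xs] | [k x_in]].
  by exists (index s ss); rewrite nth_index.
apply/flattenP; case: (ltnP k (size ss)) => [lt_k | le_k].
  by exists (nth [::] ss k); rewrite ?mem_nth.
by rewrite nth_default in x_in.
Qed.

Lemma uniq_flattenP (T : eqType) (ss : seq (seq T)) :
  uniq (flatten ss) <->
  (forall i, uniq (nth [::] ss i)) /\
  (forall i i' x, x \in nth [::] ss i -> x \in nth [::] ss i' -> i = i').
Proof.
elim: ss => [|s ss IHss] /=.
  by split=> // _; split=> [i|i i' x]; rewrite nth_nil.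
rewrite cat_uniq; split.
  move=> /and3P[uniq_s /hasPn disj /IHss [uniq_ss disj_ss]].
  have out_s k x : x \in s -> x \in nth [::] ss k -> False.
    by move=> xs xk; have /negP := disj x (proj2 (mem_flatten_nth _ _) (ex_intro _ k xk)).
  split=> [[|i] | [|i] [|i'] x //= xi xi'].
  - exact: uniq_s.
  - exact: uniq_ss.
  - by case: (out_s _ _ xi xi').
  - by case: (out_s _ _ xi' xi).
  - by rewrite (disj_ss _ _ _ xi xi').
move=> [uniq_ss disj_ss]; apply/and3P; split.
- exact: (uniq_ss 0).
- apply/hasPn => x /mem_flatten_nth [k xk]; apply/negP => xs.
  by have := disj_ss 0 k.+1 x xs xk.
- apply/IHss; split=> [i | i i' x xi xi']; first exact: (uniq_ss i.+1).
  by have [] := disj_ss i.+1 i'.+1 x xi xi'.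
Qed.

Lemma filter_leq_iota1 n k : [seq x <- iota 1 n | x <= k] = take k (iota 1 n).
Proof.
rewrite take_iota; apply: (irr_sorted_eq ltn_trans ltnn).
- exact/sorted_filter/iota_ltn_sorted/ltn_trans.
- exact: iota_ltn_sorted.
- by move=> x; rewrite mem_filter !mem_iota; lia.
Qed.

Lemma count_mem_take_leq (T : eqType) (x : T) k s :
  count_mem x (take k s) <= count_mem x s.
Proof. by rewrite -{2}(cat_take_drop k s) count_cat leq_addr. Qed.

Definition positions (c : seq nat) (j : nat) : seq nat :=
  [seq x <- iota 1 (size c) | ent c x == j].

Section Positions.
Variable c : seq nat.

Lemma map_ent_iota k : k <= size c -> map (ent c) (iota 1 k) = take k c.
Proof.
move=> le_k_c; rewrite -(map_nth_iota0 0 le_k_c) (iotaDl 1 0) -map_comp.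
exact: eq_map.
Qed.

Lemma size_positions j : size (positions c j) = count_mem j c.
Proof.
by rewrite size_filter -(count_map (ent c) (pred1 j)) map_ent_iota // take_size.
Qed.

Lemma count_positions_leq j k :
  count (leq^~ k) (positions c j) = count_mem j (take k c).
Proof.
rewrite count_filter (eq_count (a2 := predI (fun x => ent c x == j) (leq^~ k))).
  rewrite -count_filter filter_leq_iota1 -(count_map (ent c) (pred1 j)).
  by rewrite map_take map_ent_iota // take_size.
by move=> x /=; rewrite andbC.
Qed.

Lemma mem_positions j x : (x \in positions c j) = (0 < x <= size c) && (ent c x == j).
Proof. by rewrite mem_filter mem_iota andbC; congr (_ && _); lia. Qed.

Lemma sorted_positions j : sorted ltn (positions c j).
Proof. exact/sorted_filter/iota_ltn_sorted/ltn_trans. Qed.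

Lemma uniq_positions j : uniq (positions c j).
Proof. exact: (sorted_uniq ltn_trans ltnn (sorted_positions j)). Qed.

Lemma nth_positions j i : i < count_mem j c ->
  0 < nth 0 (positions c j) i <= size c /\ ent c (nth 0 (positions c j) i) = j.
Proof.
move=> lt_i; have : nth 0 (positions c j) i \in positions c j.
  by rewrite mem_nth ?size_positions.
by rewrite mem_positions => /andP[-> /eqP].
Qed.

Lemma nth_positions_leq j i k : i < count_mem j c ->
  (nth 0 (positions c j) i <= k) = (i < count_mem j (take k c)).
Proof.
move=> lt_i; rewrite -count_positions_leq.
apply: (sorted_nth_count _ ltn_trans (sorted_positions j)).
  by move=> a b _ _ /ltnW /leq_trans; apply.
by rewrite size_positions.
Qed.

End Positions.

Definition lattice_word (d : nat) (c : seq nat) : Prop :=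
  forall k j, 0 < j < d -> count_mem j.+1 (take k c) <= count_mem j (take k c).

Lemma lattice_wordP d c :
  lattice_word d c <->
  forall j, 0 < j < d -> count_mem j.+1 c <= count_mem j c /\
    forall i, i < count_mem j.+1 c -> nth 0 (positions c j) i < nth 0 (positions c j.+1) i.
Proof.
split=> [c_lattice j j_in | c_interlaced k j j_in].
  have count_le : count_mem j.+1 c <= count_mem j c.
    by have := c_lattice (size c) j j_in; rewrite take_size.
  split=> // i lt_i; set y := nth 0 (positions c j.+1) i.
  have lt_i_take : i < count_mem j (take y c).
    have : i < count_mem j.+1 (take y c) by rewrite -nth_positions_leq.
    by move/leq_trans; apply; apply: c_lattice.
  have lt_i' : i < count_mem j c by apply: leq_trans lt_i count_le.
  rewrite ltn_neqAle nth_positions_leq // lt_i_take andbT; apply/eqP => eq_pos.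
  have [_ ent_j] := nth_positions lt_i'; have [_ ent_j1] := nth_positions lt_i.
  by move: ent_j; rewrite eq_pos -/y ent_j1; lia.
have [count_le interlaced] := c_interlaced j j_in.
case def_a: (count_mem j.+1 (take k c)) => [|a] //.
have lt_a : a < count_mem j.+1 c by rewrite -ltnS -def_a ltnS count_mem_take_leq.
have le_y : nth 0 (positions c j.+1) a <= k by rewrite nth_positions_leq // def_a.
have le_z : nth 0 (positions c j) a <= k.
  exact: ltnW (leq_trans (interlaced a lt_a) le_y).
by rewrite nth_positions_leq // (leq_trans lt_a) in le_z.
Qed.

Lemma lattice_word_count_nonincr d c j j' : lattice_word d c ->
  0 < j -> j <= j' -> j' <= d -> count_mem j' c <= count_mem j c.
Proof.
move=> c_lattice j_gt0 /subnKC <-; elim: (j' - j) => [|k IHk] le_d.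
  by rewrite addn0.
apply: leq_trans (IHk _); last lia.
by have := c_lattice (size c) (j + k); rewrite take_size addnS; apply; lia.
Qed.

Lemma mem_row_rowof (T : tableau) x :
  x \in flatten T -> x \in nth [::] T (rowof T x).
Proof.
move=> /flattenP[s sT xs]; apply: (@nth_find _ [::] (fun row => x \in row)).
by apply/hasP; exists s.
Qed.

Lemma cell_rowof (T : tableau) x : x \in flatten T ->
  [/\ rowof T x < size T, (colof T x).-1 < size (nth [::] T (rowof T x))
    & nth 0 (nth [::] T (rowof T x)) (colof T x).-1 = x].
Proof.
move=> xT; have x_row := mem_row_rowof xT.
split; last by rewrite nth_index.
  by rewrite /rowof -has_find; have /flattenP[s sT xs] := xT; apply/hasP; exists s.
by rewrite index_mem.
Qed.

Definition col_height (T : tableau) (j : nat) : nat := count (fun row => j <= size row) T.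

Lemma col_height_leq_size T j : col_height T j <= size T.
Proof. exact: count_size. Qed.

Lemma col_height_nonincr T j j' : j <= j' -> col_height T j' <= col_height T j.
Proof. by move=> le_jj'; apply: sub_count => row /=; apply: leq_trans. Qed.

Section StandardTableau.
Variables (m : nat) (T : tableau).
Hypothesis T_SYT : is_SYT m T.
Local Notation row i := (nth [::] T i).
Local Notation entry i p := (nth 0 (nth [::] T i) p).

Lemma mem_SYT x : (x \in flatten T) = (0 < x <= m).
Proof. by case: T_SYT => _ _ T_perm _ _; rewrite (perm_mem T_perm) mem_iota; lia. Qed.

Lemma SYT_row_unique i i' x : x \in row i -> x \in row i' -> i = i'.
Proof.
case: T_SYT => _ _ T_perm _ _.
have /uniq_flattenP[_ rows_disjoint] : uniq (flatten T).
  by rewrite (perm_uniq T_perm) iota_uniq.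
exact: rows_disjoint.
Qed.

Lemma sorted_SYT_row i : sorted ltn (row i).
Proof.
case: T_SYT => _ _ _ rows_sorted _; case: (ltnP i (size T)) => [lt_i | le_i].
  by apply: (allP rows_sorted); apply: mem_nth.
by rewrite nth_default.
Qed.

Lemma SYT_cell i p : i < size T -> p < size (row i) ->
  rowof T (entry i p) = i /\ colof T (entry i p) = p.+1.
Proof.
move=> lt_i lt_p; have x_row : entry i p \in row i by apply: mem_nth.
have x_T : entry i p \in flatten T by apply/mem_flatten_nth; exists i.
have rowof_x : rowof T (entry i p) = i.
  exact: SYT_row_unique (mem_row_rowof x_T) x_row.
split=> //; rewrite /colof rowof_x index_uniq //.
exact: (sorted_uniq ltn_trans ltnn (sorted_SYT_row i)).
Qed.

Lemma size_SYT_row_nonincr i i' : i <= i' -> i' < size T ->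
  size (row i') <= size (row i).
Proof.
case: T_SYT => _ shape_sorted _ _ _ le_ii' lt_i'.
have := sorted_leq_nth (rev_trans leq_trans) (fun a => leqnn a) 0 shape_sorted.
rewrite /Defs.shape size_map => /(_ i i'); rewrite !inE !(nth_map [::]) //; last lia.
by apply=> //; lia.
Qed.

Lemma SYT_col_ltn i i' p : i < i' -> i' < size T -> p < size (row i') ->
  entry i p < entry i' p.
Proof.
case: T_SYT => _ _ _ _ col_incr /subnKC <-.
elim: (i' - i.+1) => [|k IHk] lt_i' lt_p.
  by rewrite addn0 in lt_p *; apply: col_incr.
have lt_p' : p < size (row (i.+1 + k)).
  by apply: leq_trans lt_p (size_SYT_row_nonincr _ _); lia.
by apply: ltn_trans (IHk _ lt_p') _; [lia | rewrite addnS; apply: col_incr; rewrite -addnS].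
Qed.

Lemma SYT_col_leq i i' p : i <= i' -> i' < size T -> p < size (row i') ->
  entry i p <= entry i' p.
Proof.
rewrite leq_eqVlt => /orP[/eqP -> // | lt_ii'] lt_i' lt_p.
exact/ltnW/SYT_col_ltn.
Qed.

Lemma SYT_row_ltn i p q : p < q -> q < size (row i) -> entry i p < entry i q.
Proof.
move=> lt_pq lt_q.
by apply: (sorted_ltn_nth ltn_trans 0 (sorted_SYT_row i)) => //; rewrite inE; lia.
Qed.

Lemma SYT_row_leq i p q : p <= q -> q < size (row i) -> entry i p <= entry i q.
Proof.
rewrite leq_eqVlt => /orP[/eqP -> // | lt_pq] lt_q.
exact/ltnW/SYT_row_ltn.
Qed.

Lemma rowof_ltn_succ k : 0 < k < m ->
  (rowof T k < rowof T k.+1) = (colof T k.+1 <= colof T k).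
Proof.
move=> k_in.
have k_T : k \in flatten T by rewrite mem_SYT; lia.
have k1_T : k.+1 \in flatten T by rewrite mem_SYT; lia.
have [lt_i lt_p entry_k] := cell_rowof k_T.
have [lt_i' lt_q entry_k1] := cell_rowof k1_T.
move: lt_p lt_q entry_k entry_k1; rewrite /colof /=.
set i := rowof T k; set i' := rowof T k.+1; set p := index k _; set q := index k.+1 _.
move=> lt_p lt_q entry_k entry_k1; rewrite ltnS; apply/idP/idP => [lt_ii' | le_qp].
  rewrite leqNgt; apply/negP => lt_pq.
  have := SYT_col_ltn lt_ii' lt_i' (ltn_trans lt_pq lt_q); rewrite entry_k.
  by have := SYT_row_ltn lt_pq lt_q; rewrite entry_k1; lia.
rewrite ltnNge; apply/negP => le_i'i.
have := SYT_col_leq le_i'i lt_i (leq_ltn_trans le_qp lt_p); rewrite entry_k1.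
by have := SYT_row_leq le_qp lt_p; rewrite entry_k; lia.
Qed.

Lemma SYT_col_height i j : i < size T -> (i < col_height T j) = (j <= size (row i)).
Proof.
case: T_SYT => _ shape_sorted _ _ _ lt_i.
have := sorted_nth_count 0 (P := leq j) (i := i) (rev_trans leq_trans) shape_sorted.
rewrite /Defs.shape (nth_map [::]) // count_map => -> //; last by rewrite size_map.
by move=> a b _ _ /= le_ba le_jb; apply: leq_trans le_jb le_ba.
Qed.

End StandardTableau.

Lemma size_colseq m T : size (colseq m T) = m.
Proof. by rewrite size_map size_iota. Qed.

Lemma ent_colseq m T x : 0 < x <= m -> ent (colseq m T) x = colof T x.
Proof.
move=> x_in; rewrite /ent /colseq (nth_map 0) ?size_iota; last lia.
by rewrite nth_iota; [congr colof; lia | lia].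
Qed.

Lemma count_mem0_colseq m T : count_mem 0 (colseq m T) = 0.
Proof. by apply/count_memPn/mapP => -[x _]. Qed.

Section ColumnWord.
Variables (m : nat) (T : tableau).
Hypothesis T_SYT : is_SYT m T.
Local Notation row i := (nth [::] T i).
Local Notation entry i p := (nth 0 (nth [::] T i) p).
Local Notation c := (colseq m T).

Lemma positions_colseq j : 0 < j ->
  positions c j = [seq entry i j.-1 | i <- iota 0 (col_height T j)].
Proof.
move=> j_gt0; have height_le := col_height_leq_size T j.
apply: (irr_sorted_eq ltn_trans ltnn (sorted_positions _ _)).
  apply: sorted_map_iota => i _ lt_i; apply: (SYT_col_ltn T_SYT) => //; first lia.
  by rewrite -(SYT_col_height T_SYT) ?prednK //; lia.
move=> x; rewrite mem_positions size_colseq; apply/idP/mapP => [| [i]].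
  move=> /andP[x_in /eqP]; rewrite ent_colseq // => <-.
  have x_T : x \in flatten T by rewrite (mem_SYT T_SYT).
  have [lt_i lt_p x_entry] := cell_rowof x_T.
  exists (rowof T x); last by rewrite x_entry.
  by rewrite mem_iota /= (SYT_col_height T_SYT) ?prednK.
rewrite mem_iota /= => lt_i ->.
have lt_i_T : i < size T by apply: leq_trans lt_i height_le.
have lt_p : j.-1 < size (row i) by rewrite prednK // -(SYT_col_height T_SYT).
have [_ colof_x] := SYT_cell T_SYT lt_i_T lt_p.
have x_T : entry i j.-1 \in flatten T by apply/mem_flatten_nth; exists i; rewrite mem_nth.
move: (x_T); rewrite (mem_SYT T_SYT) => -> /=.
by rewrite ent_colseq -?(mem_SYT T_SYT) // colof_x prednK.
Qed.

Lemma count_mem_colseq j : 0 < j -> count_mem j c = col_height T j.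
Proof. by move=> j_gt0; rewrite -size_positions positions_colseq // size_map size_iota. Qed.

Lemma colseq_lattice_word d : lattice_word d c.
Proof.
apply/lattice_wordP => j /andP[j_gt0 _]; rewrite !count_mem_colseq //.
split=> [|i lt_i]; first exact: col_height_nonincr.
have lt_i' : i < col_height T j by apply: leq_trans lt_i (col_height_nonincr _ _).
have lt_i_T : i < size T by apply: leq_trans lt_i (col_height_leq_size _ _).
rewrite !positions_colseq // !(nth_map 0) ?size_iota // !nth_iota //=.
by apply: (SYT_row_ltn T_SYT); rewrite -?(SYT_col_height T_SYT); lia.
Qed.

Lemma colseq_range d : all (fun row => size row <= d) T -> all (fun x => 1 <= x <= d) c.
Proof.
move=> rows_le_d; apply/allP => y /mapP[x]; rewrite mem_iota => x_in ->.
have x_T : x \in flatten T by rewrite (mem_SYT T_SYT); lia.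
have [lt_i lt_p _] := cell_rowof x_T.
have /allP/(_ _ (mem_nth [::] lt_i)) := rows_le_d; rewrite /colof /= in lt_p *; lia.
Qed.

End ColumnWord.

Lemma count_mem_colseq_shape m P Q :
  is_SYT m P -> is_SYT m Q -> Defs.shape P = Defs.shape Q ->
  forall j, count_mem j (colseq m P) = count_mem j (colseq m Q).
Proof.
move=> P_SYT Q_SYT eq_shape [|j]; first by rewrite !count_mem0_colseq.
rewrite !count_mem_colseq //.
by have := congr1 (count (leq j.+1)) eq_shape; rewrite !count_map.
Qed.

Definition row_length (d : nat) (c : seq nat) (i : nat) : nat :=
  count (fun j => i < count_mem j c) (iota 1 d).

(* By the lattice property the letters occurring more than [i] times form an
   initial segment [1 .. row_length d c i], and their [(i+1)]-st occurrences
   increase from left to right. *)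
Definition tableau_of_word (d : nat) (c : seq nat) : tableau :=
  [seq [seq nth 0 (positions c j) i | j <- iota 1 (row_length d c i)]
     | i <- iota 0 (count_mem 1 c)].

Lemma row_length_leq d c i : row_length d c i <= d.
Proof. by rewrite /row_length (leq_trans (count_size _ _)) ?size_iota. Qed.

Lemma size_tableau_of_word d c : size (tableau_of_word d c) = count_mem 1 c.
Proof. by rewrite size_map size_iota. Qed.

Lemma shape_tableau_of_word d c :
  Defs.shape (tableau_of_word d c) = [seq row_length d c i | i <- iota 0 (count_mem 1 c)].
Proof.
by rewrite /Defs.shape -map_comp; apply: eq_map => i /=; rewrite size_map size_iota.
Qed.

Section Reconstruction.
Variables (d : nat) (c : seq nat).
Hypotheses (c_range : all (fun x => 1 <= x <= d) c) (c_lattice : lattice_word d c).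
Local Notation S := (tableau_of_word d c).

Lemma row_length_spec i j : 0 < j <= d -> (i < count_mem j c) = (j <= row_length d c i).
Proof.
apply: (count_iota_downclosed (P := fun j => i < count_mem j c)) => a b a_gt0 le_ab le_bd.
by move=> /leq_trans; apply; apply: (lattice_word_count_nonincr c_lattice).
Qed.

Lemma nth_tableau_of_word i : i < count_mem 1 c ->
  nth [::] S i = [seq nth 0 (positions c j) i | j <- iota 1 (row_length d c i)].
Proof. by move=> lt_i; rewrite (nth_map 0) ?size_iota // nth_iota. Qed.

Lemma size_row_tableau_of_word i : i < count_mem 1 c ->
  size (nth [::] S i) = row_length d c i.
Proof. by move=> lt_i; rewrite nth_tableau_of_word // size_map size_iota. Qed.

Lemma entry_tableau_of_word i p : i < count_mem 1 c -> p < row_length d c i ->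
  nth 0 (nth [::] S i) p = nth 0 (positions c p.+1) i.
Proof.
by move=> lt_i lt_p; rewrite nth_tableau_of_word // (nth_map 0) ?size_iota // nth_iota.
Qed.

Lemma lt_count_mem_row_length i p : p < row_length d c i -> i < count_mem p.+1 c.
Proof. by move=> lt_p; rewrite row_length_spec //; have := row_length_leq d c i; lia. Qed.

Lemma mem_row_tableau_of_word i x : x \in nth [::] S i ->
  0 < x <= size c /\ i = index x (positions c (ent c x)).
Proof.
case: (ltnP i (count_mem 1 c)) => [lt_i | le_i]; last first.
  by rewrite nth_default ?size_tableau_of_word.
rewrite nth_tableau_of_word // => /mapP[j]; rewrite mem_iota => j_in ->.
have lt_i_j : i < count_mem j c by rewrite row_length_spec; have := row_length_leq d c i; lia.
have [x_in ->] := nth_positions lt_i_j.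
by rewrite index_uniq ?size_positions ?uniq_positions.
Qed.

Lemma ent_range x : 0 < x <= size c -> 0 < ent c x <= d.
Proof.
by move=> /andP[x_gt0 le_x]; apply: (allP c_range); rewrite mem_nth // prednK.
Qed.

Lemma cell_tableau_of_word x : 0 < x <= size c -> exists i,
  [/\ i < count_mem 1 c, (ent c x).-1 < row_length d c i
     & nth 0 (nth [::] S i) (ent c x).-1 = x].
Proof.
move=> x_in; exists (index x (positions c (ent c x))).
have j_in := ent_range x_in.
have x_pos : x \in positions c (ent c x) by rewrite mem_positions x_in eqxx.
have lt_i : index x (positions c (ent c x)) < count_mem (ent c x) c.
  by rewrite -size_positions index_mem.
have lt_i1 : index x (positions c (ent c x)) < count_mem 1 c.
  by apply: leq_trans lt_i (lattice_word_count_nonincr c_lattice _ _ _); lia.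
have lt_p : (ent c x).-1 < row_length d c (index x (positions c (ent c x))).
  by rewrite prednK -?row_length_spec //; lia.
by split=> //; rewrite entry_tableau_of_word // prednK ?nth_index //; lia.
Qed.

Lemma sorted_row_tableau_of_word i : sorted ltn (nth [::] S i).
Proof.
case: (ltnP i (count_mem 1 c)) => [lt_i | le_i]; last first.
  by rewrite nth_default ?size_tableau_of_word.
rewrite nth_tableau_of_word //; apply: sorted_map_iota => k k_gt0 lt_k.
have k_in : 0 < k < d by have := row_length_leq d c i; lia.
have [_ interlaced] := proj1 (lattice_wordP d c) c_lattice k k_in.
by apply: interlaced; apply: lt_count_mem_row_length; lia.
Qed.

Lemma perm_tableau_of_word : perm_eq (flatten S) (iota 1 (size c)).
Proof.
apply: uniq_perm; [apply/uniq_flattenP; split | exact: iota_uniq | move=> x].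
- by move=> i; apply: (sorted_uniq ltn_trans ltnn (sorted_row_tableau_of_word i)).
- by move=> i i' x /mem_row_tableau_of_word[_ ->] /mem_row_tableau_of_word[_ ->].
rewrite mem_iota; apply/idP/idP => [/mem_flatten_nth[i /mem_row_tableau_of_word[]] | x_in].
  by lia.
have [i [lt_i lt_p <-]] := @cell_tableau_of_word x ltac:(lia).
by apply/mem_flatten_nth; exists i; rewrite mem_nth ?size_row_tableau_of_word.
Qed.

Lemma tableau_of_word_SYT : is_SYT (size c) S.
Proof.
split; [apply/allP | | exact: perm_tableau_of_word | apply/allP | ].
- move=> row /mapP[i]; rewrite mem_iota => lt_i ->.
  have /(allP c_range) d_gt0 : 1 \in c by rewrite -has_pred1 has_count; lia.
  by rewrite size_map size_iota -row_length_spec //; lia.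
- rewrite shape_tableau_of_word; apply: sorted_map_iota => k _ _.
  by apply: sub_count => j /=; apply: ltnW.
- move=> row /mapP[i]; rewrite mem_iota => lt_i ->.
  by have := sorted_row_tableau_of_word i; rewrite nth_tableau_of_word.
move=> i p; case: (ltnP i.+1 (count_mem 1 c)) => [lt_i | le_i]; last first.
  by rewrite nth_default ?size_tableau_of_word.
rewrite size_row_tableau_of_word // => lt_p.
have lt_p' : p < row_length d c i.
  have le_d := row_length_leq d c i.+1.
  by rewrite -row_length_spec; [apply/ltnW/lt_count_mem_row_length | lia].
rewrite !entry_tableau_of_word //; last by lia.
have lt_i_p := lt_count_mem_row_length lt_p.
apply: (sorted_ltn_nth ltn_trans 0 (sorted_positions c p.+1));
  by rewrite ?inE ?size_positions // ltnW.
Qed.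

Lemma tableau_of_word_in_T : in_T (size c) d S.
Proof.
split; first exact: tableau_of_word_SYT.
by apply/allP => _ /mapP[i _ ->]; rewrite size_map size_iota row_length_leq.
Qed.

Lemma colseq_tableau_of_word : colseq (size c) S = c.
Proof.
rewrite /colseq -{3}(take_size c) -map_ent_iota //; apply/eq_in_map => x.
rewrite mem_iota => x_in; have x_in' : 0 < x <= size c by lia.
have [i [lt_i lt_p x_entry]] := cell_tableau_of_word x_in'.
have lt_i_S : i < size S by rewrite size_tableau_of_word.
have lt_p_S : (ent c x).-1 < size (nth [::] S i) by rewrite size_row_tableau_of_word.
have [_] := SYT_cell tableau_of_word_SYT lt_i_S lt_p_S.
by have /andP[ent_gt0 _] := ent_range x_in'; rewrite x_entry prednK.
Qed.

End Reconstruction.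

Lemma tableau_of_word_colseq m d T : in_T m d T -> tableau_of_word d (colseq m T) = T.
Proof.
move=> [T_SYT rows_le_d]; have [rows_nonempty _ _ _ _] := T_SYT.
set c := colseq m T; have count_c j : 0 < j -> count_mem j c = col_height T j.
  exact: count_mem_colseq.
apply: (@eq_from_nth _ [::]) => [|i].
  by rewrite size_tableau_of_word count_c //; apply/eqP; rewrite -all_count.
rewrite size_tableau_of_word count_c // => lt_i.
have lt_i_T : i < size T by apply: leq_trans lt_i (col_height_leq_size _ _).
have row_le_d : size (nth [::] T i) <= d by apply: (allP rows_le_d); apply: mem_nth.
have length_i : row_length d c i = size (nth [::] T i).
  rewrite /row_length -(count_iota_leq row_le_d); apply: eq_in_count => j.
  by rewrite mem_iota => j_in /=; rewrite count_c ?(SYT_col_height T_SYT) //; lia.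
apply: (@eq_from_nth _ 0) => [|p]; rewrite size_row_tableau_of_word ?count_c // length_i //.
move=> lt_p; rewrite entry_tableau_of_word ?count_c ?length_i //.
rewrite /c (positions_colseq T_SYT) //.
by rewrite (nth_map 0) ?nth_iota ?size_iota // (SYT_col_height T_SYT).
Qed.

Lemma shape_tableau_of_word_eq d a b : (forall j, count_mem j a = count_mem j b) ->
  Defs.shape (tableau_of_word d a) = Defs.shape (tableau_of_word d b).
Proof.
move=> eq_counts; rewrite !shape_tableau_of_word eq_counts.
by apply: eq_map => i; apply: eq_count => j; rewrite /= eq_counts.
Qed.

Lemma colseq_inj m d T T' :
  in_T m d T -> in_T m d T' -> colseq m T = colseq m T' -> T = T'.
Proof.
move=> T_in T'_in eq_c.
by rewrite -(tableau_of_word_colseq T_in) -(tableau_of_word_colseq T'_in) eq_c.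
Qed.

Lemma coord_steps (a b : seq nat) j :
  Defs.coord (steps (a, b)) j = ((count_mem j a)%:Z - (count_mem j b)%:Z)%R.
Proof.
rewrite /Defs.coord /steps !count_cat !count_map.
have count_and (p : bool) (s : seq nat) :
    count (fun x => (x == j) && p) s = if p then count_mem j s else 0.
  case: p; first by apply: eq_count => x; rewrite andbT.
  by rewrite (eq_count (a2 := pred0)) ?count_pred0 // => x; rewrite andbF.
by rewrite !count_and addn0.
Qed.

Lemma take_steps (a b : seq nat) k :
  take k (steps (a, b)) = steps (take k a, take (k - size a) b).
Proof.
rewrite /steps /= take_cat size_map -!map_take; case: (ltnP k (size a)) => [lt_k | le_k].
  by rewrite (_ : k - size a = 0) ?take0 ?cats0 //; lia.
by rewrite (take_oversize le_k).
Qed.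

Lemma size_steps (w : walk) : size (steps w) = size w.1 + size w.2.
Proof. by rewrite /steps size_cat !size_map. Qed.

Section ChamberWalk.
Variables (a b : seq nat).
Hypotheses (eq_size : size a = size b)
           (eq_count_mem : forall j, count_mem j a = count_mem j b).

Lemma coord_take_first k j : k <= size a ->
  Defs.coord (take k (steps (a, rev b))) j = Posz (count_mem j (take k a)).
Proof.
by move=> le_k; rewrite take_steps coord_steps (_ : k - size a = 0) ?take0 /= ?subr0 //; lia.
Qed.

(* Walking back along [rev b] retraces the prefix counts of [b]. *)
Lemma coord_take_second t j : t <= size b ->
  Defs.coord (take (size a + (size b - t)) (steps (a, rev b))) j =
  Posz (count_mem j (take t b)).
Proof.
move=> le_t; rewrite take_steps coord_steps addKn take_oversize ?leq_addr //.
rewrite take_rev (_ : size b - (size b - t) = t) ?count_rev; last lia.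
rewrite eq_count_mem -{1}(cat_take_drop t b) count_cat.
by rewrite PoszD addrK.
Qed.

Lemma stays_in_chamber_lattice_words d :
  stays_in_chamber d (a, rev b) <-> lattice_word d a /\ lattice_word d b.
Proof.
have take_min (s : seq nat) k : take k s = take (minn k (size s)) s.
  by rewrite take_min take_size.
have size_walk : size (steps (a, rev b)) = size a + size b by rewrite size_steps /= size_rev.
split=> [chamber | [a_lattice b_lattice] k].
  split=> k j j_in; rewrite take_min.
    have := chamber (minn k (size a)) ltac:(lia) j j_in.
    by rewrite !coord_take_first ?geq_minr // lez_nat.
  have := chamber (size a + (size b - minn k (size b))) ltac:(lia) j j_in.
  by rewrite !coord_take_second ?geq_minr // lez_nat.
rewrite size_walk => le_k j j_in; case: (leqP k (size a)) => [le_ka | lt_ak].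
  by rewrite !coord_take_first // lez_nat; apply: a_lattice.
have -> : k = size a + (size b - (size a + size b - k)) by lia.
have le_t : size a + size b - k <= size b by lia.
by rewrite !coord_take_second // lez_nat; apply: b_lattice.
Qed.

End ChamberWalk.

Lemma condT_block_decr n r m T : m = r * n -> is_SYT m T ->
  condT n r T <-> block_decr n r (colseq m T).
Proof.
move=> def_m T_SYT.
have rowof_ent i s : 1 <= i <= n -> 1 <= s < r ->
    (rowof T (r * (i - 1) + s) < rowof T (r * (i - 1) + s + 1)) =
    (ent (colseq m T) (r * (i - 1) + s + 1) <= ent (colseq m T) (r * (i - 1) + s)).
  move=> i_in s_in; have : r * (i - 1).+1 <= r * n by apply: leq_mul; lia.
  rewrite mulnSr => le_rn; rewrite addn1 !ent_colseq ?(rowof_ltn_succ T_SYT) //; nia.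
by split=> cond i s i_in s_in; [rewrite -rowof_ent | rewrite rowof_ent] => //; apply: cond.
Qed.

Lemma corr_good_walk n r d m P Q : m = r * n ->
  good_pair n r d m P Q -> good_walk n r d m (corr m P Q).
Proof.
move=> def_m [[P_SYT P_rows] [Q_SYT Q_rows] eq_shape P_cond Q_cond].
have eq_counts := count_mem_colseq_shape P_SYT Q_SYT eq_shape.
split.
  exists (colseq m P, colseq m Q); split=> //; split=> /=.
  - by rewrite !size_colseq.
  - exact: colseq_range.
  - exact: colseq_range.
  - by move=> j; rewrite coord_steps eq_counts subrr.
  - by split; [apply/(condT_block_decr def_m P_SYT) | apply/(condT_block_decr def_m Q_SYT)].
apply/stays_in_chamber_lattice_words; rewrite ?size_colseq //.
by split; apply: colseq_lattice_word.
Qed.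

Lemma corr_inj n r d m P Q P' Q' : good_pair n r d m P Q -> good_pair n r d m P' Q' ->
  corr m P Q = corr m P' Q' -> P = P' /\ Q = Q'.
Proof.
move=> [P_in Q_in _ _ _] [P'_in Q'_in _ _ _] [eq_cP /(can_inj revK) eq_cQ].
by split; [apply: (colseq_inj P_in P'_in) | apply: (colseq_inj Q_in Q'_in)].
Qed.

Lemma corr_surj n r d m w : m = r * n -> good_walk n r d m w ->
  exists P Q, good_pair n r d m P Q /\ corr m P Q = w.
Proof.
move=> def_m [[[a b] [[[size_a size_b] a_range b_range origin [a_decr b_decr]] ->]] chamber].
have eq_counts j : count_mem j a = count_mem j b.
  by have /eqP := origin j; rewrite coord_steps subr_eq0 => /eqP[].
have [a_lattice b_lattice] : lattice_word d a /\ lattice_word d b.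
  by apply/stays_in_chamber_lattice_words; rewrite ?size_a ?size_b.
have colseq_a : colseq m (tableau_of_word d a) = a by rewrite -size_a colseq_tableau_of_word.
have colseq_b : colseq m (tableau_of_word d b) = b by rewrite -size_b colseq_tableau_of_word.
exists (tableau_of_word d a), (tableau_of_word d b).
split; last by rewrite /corr colseq_a colseq_b.
have Ta_in : in_T m d (tableau_of_word d a) by rewrite -size_a; apply: tableau_of_word_in_T.
have Tb_in : in_T m d (tableau_of_word d b) by rewrite -size_b; apply: tableau_of_word_in_T.
split=> //; first exact: shape_tableau_of_word_eq.
  by apply/(condT_block_decr def_m Ta_in.1); rewrite colseq_a.
by apply/(condT_block_decr def_m Tb_in.1); rewrite colseq_b.
Qed.

Theorem corollary1 (n r d m : nat) :
  0 < n -> 0 < r -> 0 < d -> m = r * n ->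
  [/\ (forall P Q : tableau, good_pair n r d m P Q -> good_walk n r d m (corr m P Q)),
      (forall P Q P' Q' : tableau, good_pair n r d m P Q -> good_pair n r d m P' Q' ->
         corr m P Q = corr m P' Q' -> P = P' /\ Q = Q')
    & (forall w : walk, good_walk n r d m w ->
         exists P Q : tableau, good_pair n r d m P Q /\ corr m P Q = w)].
Proof.
move=> _ _ _ def_m; split=> [P Q | P Q P' Q' | w].
- exact: corr_good_walk.
- exact: corr_inj.
- exact: corr_surj.
Qed.
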